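(* Let $G$ be a simple loopless graph on $[L]$, $p\ge1$, and let $\Phi_p:\Pi_{2p}(G)\to[\mathcal{T}(G)]^{2p}$ be the map defined recursively below. For $(\pi,\phi)\in\Pi_{2p}(G)$ and $w=\Phi_p(\pi,\phi)=(w_1,\dots,w_{2p})$ (with $w_0:=e$), for every block $\{s,r\}\in\pi$ with $s<r$ we have \[ |w_s|=|w_{s-1}|+1\quad\text{and}\quad |w_r|=|w_{r-1}|-1. \]
   Context: $\mathcal{T}(G)=\langle v\in[L]: uv=vu \text{ for } (u,v)\in E(G)\rangle$ is the trace monoid of $G$ (words in letters $[L]$ modulo commutation of adjacent letters), $e$ the empty word, $|w|$ the length of a word. $P_2(2p)$ is the set of pair partitions of $[2p]$; blocks $\{u_1,v_1\},\{u_2,v_2\}$ cross if $u_1<u_2<v_1<v_2$; $F_\pi$ is the graph on the blocks of $\pi$ with edges between crossing blocks. $\Pi_{2p}(G)=\{(\pi,\phi):\pi\in P_2(2p),\ \phi\in\operatorname{Hom}(F_\pi,G)\}$, where $\phi$ maps blocks to $[L]$ and crossing blocks to adjacent vertices. Definition of $\Phi_p$: (1) For $p=1$, $P_2(2)=\{\{\{1,2\}\}\}$; if $\phi$ assigns label $i$ to the block, $\Phi_1(\pi,\phi)=(i,e)$. (2) Given $\Phi_p$ and $(\pi,\phi)\in\Pi_{2(p+1)}(G)$, let $r$ be the smallest index in $[2(p+1)]$ that is the larger element of its block, let $U=\{s,r\}\in\pi$ with $s<r$, $i_s=\phi(U)$, $\sigma=\pi\setminus\{U\}$, $\psi=\phi|_\sigma$.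 Identify $P_2([2(p+1)]\setminus\{s,r\})$ with $P_2(2p)$ via the order-preserving bijection $[2(p+1)]\setminus\{s,r\}\to[2p]$, and write $u=\Phi_p(\sigma,\psi)=(u_k)_{k\in[2(p+1)]\setminus\{s,r\}}$; for an index $k$ let $u_{k^-}$ denote $u_j$ for the largest $j<k$ with $j\notin\{s,r\}$, and $u_{k^-}=e$ if no such $j\ge1$ exists. Then $\Phi_{p+1}(\pi,\phi)_k=u_k$ for $k<s$; $=i_s u_{s^-}$ for $k=s$; $=i_su_k$ for $s<k<r$; $=u_{r^-}$ for $k=r$; $=u_k$ for $k>r$ (products taken in $\mathcal{T}(G)$). *)

From mathcomp Require Import all_boot.
Set Implicit Arguments. Unset Strict Implicit. Unset Printing Implicit Defensive.

(* A graph G on [L] is a relation on 'I_L (simple loopless: symmetric,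
   irreflexive; these are hypotheses of the theorem).
   Elements of the trace monoid T(G) are represented by words
   (seq 'I_L); the product in T(G) is concatenation of representatives and
   the length |w| of a trace is the size of any representative.  Phi below
   produces, for each position, a representative word of the trace
   Phi_p(pi,phi)_k. *)

Definition word (L : nat) := seq 'I_L.

Inductive trace_eq (L : nat) (G : rel 'I_L) : word L -> word L -> Prop :=
  | te_refl w : trace_eq G w w
  | te_swap u v a b : G a b -> trace_eq G (u ++ a :: b :: v) (u ++ b :: a :: v)
  | te_sym w1 w2 : trace_eq G w1 w2 -> trace_eq G w2 w1
  | te_trans w1 w2 w3 : trace_eq G w1 w2 -> trace_eq G w2 w3 -> trace_eq G w1 w3.

(* A labelled pair partition (pi, phi) is a list of blocks (s, r, phi{s,r})
   with s < r. *)
Definition lblock (L : nat) := (nat * nat * 'I_L)%type.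

Definition in_Pi (L : nat) (G : rel 'I_L) (p : nat) (pi : seq (lblock L)) : Prop :=
  [/\ all (fun t : lblock L => t.1.1 < t.1.2) pi,
      perm_eq (flatten [seq [:: t.1.1; t.1.2] | t <- pi]) (iota 1 (2 * p)) &
      (* phi is a graph homomorphism F_pi -> G: crossing blocks get adjacent labels *)
      forall t1 t2 : lblock L, t1 \in pi -> t2 \in pi ->
        t1.1.1 < t2.1.1 < t1.1.2 -> t1.1.2 < t2.1.2 -> G t1.2 t2.2 ].

(* k-th entry (k >= 1) of a tuple stored as a list w = [w_1; ...; w_n],
   with w_0 := e. *)
Definition wk (L : nat) (w : seq (word L)) (k : nat) : word L :=
  if k is k'.+1 then nth [::] w k' else [::].

(* Phi_p, defined literally by the recursion of the paper.  Output is the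
   list [w_1; ...; w_{2p}]. *)
Fixpoint Phi (L : nat) (p : nat) (pi : seq (lblock L)) {struct p} : seq (word L) :=
  match p with
  | 0 => [::]
  | 1 => match pi with
         | (_, _, i) :: _ => [:: [:: i]; [::]]
         | [::] => [::]
         end
  | p'.+1 =>
    match pi with
    | [::] => [::]
    | b0 :: _ =>
      (* r = smallest index that is the larger element of its block *)
      let rmin := foldr minn (2 * p) [seq t.1.2 | t <- pi] in
      let U := nth b0 pi (find (fun t : lblock L => t.1.2 == rmin) pi) in
      let s := U.1.1 in let r := U.1.2 in let i := U.2 in
      let sigma := rem U pi in
      (* order-preserving bijection [2p] \ {s,r} -> [2(p-1)] *)
      let red k := k - (s < k) - (r < k) in
      let sigma' := [seq (red t.1.1, red t.1.2, t.2) | t <- sigma] in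
      let u' := Phi p' sigma' in
      let u k := wk u' (red k) in
      let uminus k :=
        let J := [seq j <- iota 1 k.-1 | (j != s) && (j != r)] in
        if J is [::] then [::] else u (last 0 J) in
      [seq (if k < s then u k
            else if k == s then i :: uminus s
            else if k < r then i :: u k
            else if k == r then uminus r
            else u k) | k <- iota 1 (2 * p)]
    end
  end.

From mathcomp Require Import all_boot zify.
Set Implicit Arguments. Unset Strict Implicit. Unset Printing Implicit Defensive.

(* The length of the k-th entry of Phi_p(pi, phi) is the depth of pi at k, the
   number of blocks {s, r} of pi with s <= k < r.  This invariant survives the
   recursive step whichever block U = {s, r} is removed: the entries s <= k < r
   get the extra letter i_s, and every entry k is otherwise copied from the
   entry of Phi_{p-1} at the squeezed index of the last position <= k outside
   {s, r}, where, squeezing being order-preserving, exactly the same blocks of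
   pi \ U are open.  The depth grows by one at an opener s and drops by one at
   a closer r, which is the statement. *)

Section Squeeze.
Variables s r : nat.

Definition squeeze (k : nat) := k - (s < k) - (r < k).

(* The squeezed index of the last position <= k outside {s, r}. *)
Definition squeeze_floor (k : nat) := k - (s <= k) - (r <= k).

Lemma squeeze_floorE (k : nat) : k != s -> k != r -> squeeze k = squeeze_floor k.
Proof. by rewrite /squeeze /squeeze_floor => /eqP ? /eqP ?; lia. Qed.

Hypotheses (s_gt0 : 0 < s) (s_lt_r : s < r).

Lemma squeeze_le_floor (a k : nat) : a != s -> a != r ->
  (squeeze a <= squeeze_floor k) = (a <= k).
Proof. by rewrite /squeeze /squeeze_floor => /eqP ? /eqP ?; apply/idP/idP; lia. Qed.

Lemma leq_squeeze (a b : nat) : a != s -> a != r -> b != s -> b != r ->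
  (squeeze a <= squeeze b) = (a <= b).
Proof. by move=> ? ? bs br; rewrite (squeeze_floorE bs br) squeeze_le_floor. Qed.

Lemma squeeze_in_range (a n : nat) : a != s -> a != r -> r <= n.+2 -> 0 < a <= n.+2 ->
  0 < squeeze a <= n.
Proof. by rewrite /squeeze => /eqP ? /eqP ? ? /andP [? ?]; apply/andP; split; lia. Qed.

End Squeeze.

Lemma last_filter_iotaS (P : pred nat) n :
  last 0 [seq j <- iota 1 n.+1 | P j] =
  if P n.+1 then n.+1 else last 0 [seq j <- iota 1 n | P j].
Proof.
rewrite -{1}[n.+1]addn1 iotaD add1n filter_cat /=.
by case: (P n.+1); rewrite ?cats0 // last_cat.
Qed.

Lemma last_filter_iota (P : pred nat) n : P n -> last 0 [seq j <- iota 1 n | P j] = n.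
Proof. by case: n => [|n] // Pn; rewrite last_filter_iotaS Pn. Qed.

Section PhiSizes.
Variable L : nat.
Implicit Types (pi : seq (lblock L)) (t U : lblock L) (u : seq (word L)).

(* The paper's u_k and u_{k^-}, for u indexed by [2(p+1)] \ {s, r}. *)
Definition u_at U u k := wk u (squeeze U.1.1 U.1.2 k).

Definition u_before U u k :=
  let J := [seq j <- iota 1 k.-1 | (j != U.1.1) && (j != U.1.2)] in
  if J is [::] then [::] else u_at U u (last 0 J).

Definition Phi_insert p U u :=
  [seq (if k < U.1.1 then u_at U u k
        else if k == U.1.1 then U.2 :: u_before U u U.1.1
        else if k < U.1.2 then U.2 :: u_at U u k
        else if k == U.1.2 then u_before U u U.1.2
        else u_at U u k) | k <- iota 1 (2 * p)].

Definition squeeze_blocks U pi :=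
  [seq (squeeze U.1.1 U.1.2 t.1.1, squeeze U.1.1 U.1.2 t.1.2, t.2) | t <- rem U pi].

Lemma PhiSS p b0 pi : exists2 U, U \in b0 :: pi &
  Phi p.+2 (b0 :: pi) = Phi_insert p.+2 U (Phi p.+1 (squeeze_blocks U (b0 :: pi))).
Proof.
pose rmin := foldr minn (2 * p.+2) [seq t.1.2 | t <- b0 :: pi].
pose n := find (fun t : lblock L => t.1.2 == rmin) (b0 :: pi).
exists (nth b0 (b0 :: pi) n); last by [].
by case: (ltnP n (size (b0 :: pi))) => [|n_ge]; [apply: mem_nth | rewrite nth_default ?mem_head].
Qed.

Lemma u_beforeE U u k :
  u_before U u k = u_at U u (last 0 [seq j <- iota 1 k.-1 | (j != U.1.1) && (j != U.1.2)]).
Proof. by rewrite /u_before; case: [seq j <- _ | _]. Qed.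

Lemma u_before_open s r i u : 0 < s < r -> u_before (s, r, i) u s = wk u (squeeze_floor s r s).
Proof.
case/andP=> s_gt0 s_lt_r.
rewrite u_beforeE last_filter_iota /u_at /squeeze /squeeze_floor /=; first by congr wk; lia.
by apply/andP; split; apply/eqP; lia.
Qed.

Lemma u_before_close s r i u : 0 < s < r -> u_before (s, r, i) u r = wk u (squeeze_floor s r r).
Proof.
case/andP=> s_gt0 s_lt_r.
rewrite u_beforeE /u_at /squeeze_floor /=.
have [r_s | r_s] := eqVneq r.-1 s.
  have -> : r.-1 = r.-2.+1 by lia.
  have r_s' : r.-2.+1 == s by apply/eqP; lia.
  rewrite last_filter_iotaS r_s' /= last_filter_iota /squeeze; first by congr wk; lia.
  by apply/andP; split; apply/eqP; lia.
rewrite last_filter_iota /squeeze; first by congr wk; lia.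
by rewrite r_s; apply/eqP; lia.
Qed.

Lemma wk_Phi_insert p s r i u k : 0 < s < r -> k <= 2 * p ->
  wk (Phi_insert p (s, r, i) u) k =
  let v := wk u (squeeze_floor s r k) in if s <= k < r then i :: v else v.
Proof.
move=> sr; have /andP [s_gt0 s_lt_r] := sr.
case: k => [|k] k_le /=; first by rewrite leqNgt s_gt0.
rewrite /Phi_insert (nth_map 0) ?size_iota // nth_iota // add1n /=.
have [-> | k_s] := eqVneq k.+1 s; first by rewrite ltnn leqnn s_lt_r u_before_open.
have [-> | k_r] := eqVneq k.+1 r.
  by rewrite (leq_gtF (ltnW s_lt_r)) ltnn andbF u_before_close.
rewrite /u_at (squeeze_floorE k_s k_r).
by case: (ltnP k.+1 s) => //= _; case: (ltnP k.+1 r).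
Qed.

Definition ends pi := flatten [seq [:: t.1.1; t.1.2] | t <- pi].

Definition blocks_wf p pi :=
  {in pi, forall t, [&& 0 < t.1.1, t.1.1 < t.1.2 & t.1.2 <= 2 * p]} /\ uniq (ends pi).

Definition depth pi k := count (fun t => t.1.1 <= k < t.1.2) pi.

Lemma ends_cons t pi : ends (t :: pi) = t.1.1 :: t.1.2 :: ends pi.
Proof. by []. Qed.

Lemma mem_ends pi t : t \in pi -> (t.1.1 \in ends pi) && (t.1.2 \in ends pi).
Proof. by move=> t_in; apply/andP; split; apply/flatten_mapP; exists t; rewrite // !inE eqxx ?orbT. Qed.

Lemma ends_map f pi :
  ends [seq (f t.1.1, f t.1.2, t.2) | t <- pi] = map f (ends pi).
Proof. by elim: pi => // t pi IH; rewrite map_cons !ends_cons IH. Qed.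

Lemma uniq_ends_rem pi U : uniq (ends pi) -> U \in pi ->
  uniq (U.1.1 :: U.1.2 :: ends (rem U pi)).
Proof. by move=> uniq_pi /perm_to_rem/(perm_map (fun t => [:: t.1.1; t.1.2]))/perm_flatten/perm_uniq <-. Qed.

Lemma ends_rem_neq pi U a : uniq (ends pi) -> U \in pi -> a \in ends (rem U pi) ->
  (a != U.1.1) && (a != U.1.2).
Proof.
move=> /uniq_ends_rem uniq_U /uniq_U /= /and3P [/norP [_ sE] rE _] aE.
by apply/andP; split; [move: sE | move: rE]; apply: contraNneq => <-.
Qed.

Lemma block_rem_neq pi U t : uniq (ends pi) -> U \in pi -> t \in rem U pi ->
  [/\ t.1.1 != U.1.1, t.1.1 != U.1.2, t.1.2 != U.1.1 & t.1.2 != U.1.2].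
Proof.
move=> uniq_pi U_in /mem_ends /andP [/(ends_rem_neq uniq_pi U_in) /andP [? ?]].
by move/(ends_rem_neq uniq_pi U_in) => /andP [? ?].
Qed.

Lemma size_ends pi : size (ends pi) = 2 * size pi.
Proof. by elim: pi => // t pi IH; rewrite ends_cons /= IH mulnS. Qed.

Lemma size_blocks_wf p pi : blocks_wf p pi -> size pi <= p.
Proof.
case=> bounds uniq_pi; rewrite -(leq_pmul2l (isT : 0 < 2)) -size_ends.
rewrite -[2 * p](size_iota 1); apply: uniq_leq_size => // a /flatten_mapP [t /bounds].
by rewrite !inE mem_iota => bt /orP [] /eqP ->; lia.
Qed.

Lemma depth_rem pi U k : U \in pi -> depth pi k = (U.1.1 <= k < U.1.2) + depth (rem U pi) k.
Proof. by move/perm_to_rem/permP => count_rem; rewrite /depth count_rem. Qed.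

Lemma depth_pred pi k : {in pi, forall t, (t.1.1 != k) && (t.1.2 != k)} ->
  depth pi k = depth pi k.-1.
Proof. by move=> no_end; apply: eq_in_count => t /no_end /andP [/eqP ? /eqP ?]; apply/idP/idP; lia. Qed.

Lemma depth_squeeze_blocks pi s r i k : uniq (ends pi) -> (s, r, i) \in pi -> 0 < s < r ->
  depth (squeeze_blocks (s, r, i) pi) (squeeze_floor s r k) = depth (rem (s, r, i) pi) k.
Proof.
move=> uniq_pi U_in /andP [s_gt0 s_lt_r]; rewrite /depth count_map.
apply: eq_in_count => t /(block_rem_neq uniq_pi U_in) [? ? ? ?] /=.
by rewrite !ltnNge !squeeze_le_floor.
Qed.

Lemma blocks_wf_squeeze p pi s r i : blocks_wf p.+1 pi -> (s, r, i) \in pi ->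
  blocks_wf p (squeeze_blocks (s, r, i) pi).
Proof.
case=> bounds uniq_pi U_in.
have /and3P [s_gt0 s_lt_r r_le] : [&& 0 < s, s < r & r <= 2 * p.+1] := bounds _ U_in.
rewrite mulnS add2n in r_le; split.
- move=> _ /mapP [t t_in ->] /=.
  have /= [as_ ar bs br] := block_rem_neq uniq_pi U_in t_in.
  have /and3P [a_gt0 a_lt_b] := bounds t (mem_rem t_in); rewrite mulnS add2n => b_le.
  have /andP [sa_gt0 _] : 0 < squeeze s r t.1.1 <= 2 * p.
    by apply: squeeze_in_range => //; rewrite a_gt0 ltnW // (leq_trans a_lt_b).
  have /andP [_ sb_le] : 0 < squeeze s r t.1.2 <= 2 * p.
    by apply: squeeze_in_range => //; rewrite b_le (ltn_trans a_gt0 a_lt_b).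
  by rewrite sa_gt0 sb_le ltnNge leq_squeeze // -ltnNge a_lt_b.
- have /and3P [_ _ uniq_rem] := uniq_ends_rem uniq_pi U_in.
  rewrite /squeeze_blocks ends_map map_inj_in_uniq // => a b aE bE eq_ab.
  have /andP [a_s a_r] := ends_rem_neq uniq_pi U_in aE.
  have /andP [b_s b_r] := ends_rem_neq uniq_pi U_in bE.
  apply/eqP; rewrite eqn_leq -(leq_squeeze s_gt0 s_lt_r a_s a_r b_s b_r).
  by rewrite -(leq_squeeze s_gt0 s_lt_r b_s b_r a_s a_r) eq_ab leqnn.
Qed.

Lemma size_Phi p pi k : 0 < p -> blocks_wf p pi -> k <= 2 * p ->
  size (wk (Phi p pi) k) = depth pi k.
Proof.
elim: p pi k => [|p IHp] [|b0 pi] k // _ wf_pi k_le.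
  by case: p {IHp wf_pi k_le} => [|p]; case: k => [|k]; rewrite /= ?nth_nil.
case: p IHp wf_pi k_le => [|p] IHp wf_pi k_le.
  have := size_blocks_wf wf_pi; case: pi wf_pi => // wf_pi _.
  case: b0 wf_pi => [[s r] i] [/(_ _ (mem_head _ _)) /and3P /= [? ? ?] _].
  by rewrite /depth; case: k k_le => [|[|[|k]]] //= _; lia.
have [[[s r] i] U_in ->] := PhiSS p b0 pi.
have [bounds uniq_pi] := wf_pi.
have /and3P [s_gt0 s_lt_r r_le] : [&& 0 < s, s < r & r <= 2 * p.+2] := bounds _ U_in.
have sr : 0 < s < r by rewrite s_gt0.
rewrite wk_Phi_insert // (depth_rem k U_in) -(depth_squeeze_blocks k uniq_pi U_in sr) -IHp //.
- by rewrite /=; case: ifP.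
- exact: blocks_wf_squeeze.
- by rewrite /squeeze_floor; lia.
Qed.

Lemma blocks_wf_of_Pi (G : rel 'I_L) p pi : in_Pi G p pi -> blocks_wf p pi.
Proof.
case=> /allP lt_blocks perm_ends _.
split; last by rewrite (perm_uniq perm_ends) iota_uniq.
move=> t t_in; have /andP := mem_ends t_in.
rewrite !(perm_mem perm_ends) !mem_iota; have := lt_blocks t t_in; lia.
Qed.

End PhiSizes.

Theorem lemma3p1 (L : nat) (G : rel 'I_L) (Gsym : symmetric G)
  (Girr : irreflexive G) (p : nat) (hp : 1 <= p) (pi : seq (lblock L))
  (Hpi : in_Pi G p pi) :
  forall (s r : nat) (i : 'I_L), (s, r, i) \in pi ->
    size (wk (Phi p pi) s) = (size (wk (Phi p pi) s.-1)).+1 /\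
    size (wk (Phi p pi) r) + 1 = size (wk (Phi p pi) r.-1).
Proof.
move=> s r i U_in.
have wf_pi := blocks_wf_of_Pi Hpi; have [bounds uniq_pi] := wf_pi.
have /and3P [s_gt0 s_lt_r r_le] : [&& 0 < s, s < r & r <= 2 * p] := bounds _ U_in.
have off_s : {in rem (s, r, i) pi, forall t, (t.1.1 != s) && (t.1.2 != s)}.
  by move=> t /(block_rem_neq uniq_pi U_in) [/= -> _ -> _].
have off_r : {in rem (s, r, i) pi, forall t, (t.1.1 != r) && (t.1.2 != r)}.
  by move=> t /(block_rem_neq uniq_pi U_in) [/= _ -> _ ->].
rewrite !size_Phi //; try lia.
rewrite !(depth_rem _ U_in) (depth_pred off_s) (depth_pred off_r) /=.
split; lia.
Qed.
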